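(* In the setting below, fix $(s,a)\in\mathcal{K}$ and a policy $\pi$. Let $u^\pi=\gamma(\widehat{P}_\mathcal{K}(\cdot|s,a)-P(\cdot|s,a))\widehat{V}^\pi$ and $u^*=\gamma(\widehat{P}_\mathcal{K}(\cdot|s,a)-P(\cdot|s,a))\widehat{V}^*$. Then $$\widehat{Q}^\pi=\widetilde{Q}^\pi_{u^\pi},\quad \widehat{Q}^*=\widetilde{Q}^{\widehat{\pi}^*}_{u^*}=\widetilde{Q}^*_{u^*},\quad -\tfrac{1}{1-\gamma}\le u^\pi\le\tfrac{1}{1-\gamma},\quad -\tfrac{1}{1-\gamma}\le u^*\le\tfrac{1}{1-\gamma}.$$
   Context: $M=(\mathcal{S},\mathcal{A},P,r,\gamma)$ is a discounted MDP (finite $\mathcal{S},\mathcal{A}$, $r\in[0,1]$, $\gamma\in(0,1)$) with linear representation $P(s'|s,a)=\sum_k\phi_k(s,a)\psi_k(s')$ satisfying the anchor-state assumption: anchors $\mathcal{K}=\{(s_k,a_k)\}_{k=1}^K$, $\lambda_k^{s,a}\ge0$, $\sum_k\lambda_k^{s,a}=1$, $\phi(s,a)=\sum_k\lambda_k^{s,a}\phi(s_k,a_k)$. $\widehat{P}_\mathcal{K}(\cdot|s_k,a_k)$ is the empirical distribution of $N$ samples from $P(\cdot|s_k,a_k)$; $\widehat{P}(s'|s'',a'')=\sum_k\lambda_k^{s'',a''}\widehat{P}_\mathcal{K}(s'|s_k,a_k)$; $\widehat{M}=(\mathcal{S},\mathcal{A},\widehat{P},r,\gamma)$ with Q-functions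 $\widehat{Q}^\pi$, value functions $\widehat{V}^\pi$, optimal policy $\widehat{\pi}^*$, $\widehat{V}^*=\widehat{V}^{\widehat{\pi}^*}$, $\widehat{Q}^*=\widehat{Q}^{\widehat{\pi}^*}$. Auxiliary MDP: for $(s,a)=(s_j,a_j)\in\mathcal{K}$ and $u\in\mathbb{R}$, $\widetilde{M}_{s,a,u}=(\mathcal{S},\mathcal{A},\widetilde{P},r+u\Lambda^{s,a},\gamma)$ where $\widetilde{P}_\mathcal{K}(\cdot|s_k,a_k)=\widehat{P}_\mathcal{K}(\cdot|s_k,a_k)$ for $k\ne j$ and $\widetilde{P}_\mathcal{K}(\cdot|s_j,a_j)=P(\cdot|s,a)$, $\widetilde{P}(s'|s'',a'')=\sum_k\lambda_k^{s'',a''}\widetilde{P}_\mathcal{K}(s'|s_k,a_k)$, and $\Lambda^{s,a}\in\mathbb{R}^{\mathcal{S}\times\mathcal{A}}$ is the vector $(s'',a'')\mapsto\lambda_j^{s'',a''}$. $\widetilde{Q}^\pi_u$, $\widetilde{Q}^*_u$ denote the Q-function of $\pi$ and the optimal Q-function in $\widetilde{M}_{s,a,u}$. Here $\widehat{P}_\mathcal{K}(\cdot|s,a)V$ denotes $\sum_{s'}\widehat{P}_\mathcal{K}(s'|s,a)V(s')$. *)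

From mathcomp Require Import all_boot all_order all_algebra.
From mathcomp Require Import all_classical all_reals all_analysis.
Set Implicit Arguments. Unset Strict Implicit. Unset Printing Implicit Defensive.
Import Order.TTheory GRing.Theory Num.Theory numFieldNormedType.Exports.
Local Open Scope classical_set_scope.
Local Open Scope ring_scope.

Section MDP.
Variables (R : realType) (S A : finType).

Definition is_policy (pol : S -> A -> R) : Prop :=
  forall s, (forall a, 0 <= pol s a) /\ \sum_a pol s a = 1.

Definition is_kernel (P : S -> A -> S -> R) : Prop :=
  forall s a, (forall s', 0 <= P s a s') /\ \sum_s' P s a s' = 1.

Definition Vof (pol : S -> A -> R) (Q : S -> A -> R) : S -> R :=
  fun s => \sum_a pol s a * Q s a.

Definition bellman (P : S -> A -> S -> R) (r : S -> A -> R) (g : R)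
  (pol : S -> A -> R) (Q : S -> A -> R) : S -> A -> R :=
  fun s a => r s a + g * \sum_s' P s a s' * Vof pol Q s'.

(* Q^pi(s,a) = lim_n (expected discounted reward over the first n steps),
   the n-step return being iter n (bellman ...) 0. *)
Definition Qpi (P : S -> A -> S -> R) (r : S -> A -> R) (g : R)
  (pol : S -> A -> R) : S -> A -> R :=
  fun s a => limn (fun n : nat => iter n (bellman P r g pol) (fun _ _ => 0) s a : R).

Definition Vpi P r g pol : S -> R := Vof pol (Qpi P r g pol).

Definition is_optimal_policy P r g (pol : S -> A -> R) : Prop :=
  is_policy pol /\ forall pol', is_policy pol' -> forall s, Vpi P r g pol' s <= Vpi P r g pol s.

Definition Qopt P r g : S -> A -> R :=
  fun s a => sup [set Qpi P r g pol s a | pol in [set pol | is_policy pol]].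

Definition empirical (N : nat) (smp : 'I_N -> S) : S -> R :=
  fun s' => #|[set i | smp i == s']|%:R / N%:R.

Definition lin_extend (K : nat) (lam : S -> A -> 'I_K -> R) (PK : 'I_K -> S -> R)
  : S -> A -> S -> R :=
  fun s a s' => \sum_k lam s a k * PK k s'.

Definition PK_replace (K : nat) (PK : 'I_K -> S -> R) (j : 'I_K) (p : S -> R) : 'I_K -> S -> R :=
  fun k => if k == j then p else PK k.

Definition aux_reward (r : S -> A -> R) (K : nat) (lam : S -> A -> 'I_K -> R) (j : 'I_K) (u : R)
  : S -> A -> R :=
  fun s a => r s a + u * lam s a j.

Definition dotp (p V : S -> R) : R := \sum_s' p s' * V s'.

End MDP.

From mathcomp Require Import all_boot all_order all_algebra.
From mathcomp Require Import all_classical all_reals all_analysis.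
From mathcomp Require Import ring lra.
Import Order.TTheory GRing.Theory Num.Theory numFieldNormedType.Exports.
Local Open Scope classical_set_scope.
Local Open Scope ring_scope.

(* The empirical model [Phat] mixes the anchor rows with the weights [lam]; replacing the
   j-th anchor row by the true row [P (sK j) (aK j)] changes the expected next value at
   [(s, a)] by [lam s a j * (dotp (PKhat j) V - dotp (P (sK j) (aK j)) V)].  For
   [V = Vpi Phat r g pol] this change is exactly cancelled by the reward shift [u * lam j],
   so [Qpi Phat r g pol] solves the Bellman equation of the auxiliary model, and Bellman
   fixpoints are unique when [g < 1].  [Qpi] itself is a Bellman fixpoint because it is the
   limit of value iteration, whose increments decay like [g ^+ n].
   Uniqueness and all other comparisons rest on a minimum principle: if
   [g * next_value P pol D <= D] then [D >= 0], since at a minimum point of [D] this gives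
   [min D <= g * min D].  An optimal policy is greedy for its own Q-function (otherwise
   switching to a better action at one state would improve it); greediness carries over to
   the auxiliary model, where a greedy policy dominates every policy, so its Q-function is
   the supremum [Qopt].  The bounds on [u] follow from [0 <= Vpi <= (1 - g)^-1]. *)

Lemma cvgn_geometric_increments (R : realType) (u : R ^nat) (M q : R) :
  0 <= q < 1 -> (forall n, `|u n.+1 - u n| <= M * q ^+ n) -> cvgn u.
Proof.
move=> /andP[q0 q1] hu.
have M0 : 0 <= M by have := le_trans (normr_ge0 _) (hu 0%N); rewrite expr0 mulr1.
have cvg_tele : cvgn (series (telescope u)).
  apply: normed_cvg; apply: (@series_le_cvg _ _ (geometric M q)) => [n|n|n|].
  - exact: normr_ge0.
  - by rewrite /geometric /= mulr_ge0 ?exprn_ge0.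
  - exact: hu.
  - by apply: is_cvg_geometric_series; rewrite ger0_norm.
rewrite (_ : u = fun n => u 0%N + series (telescope u) n); last first.
  by apply/funext => n; rewrite -eq_sum_telescope.
by apply: is_cvgD; [exact: is_cvg_cst | exact: cvg_tele].
Qed.

Lemma cvgn_sum (R : realType) (I : finType) (u : I -> R ^nat) (l : I -> R) :
  (forall i, u i n @[n --> \oo] --> l i) -> \sum_i u i n @[n --> \oo] --> \sum_i l i.
Proof. by move=> cvg_u; apply: cvg_big => //; exact: add_continuous. Qed.

Definition is_distr {R : numDomainType} {I : finType} (w : I -> R) : Prop :=
  (forall i, 0 <= w i) /\ \sum_i w i = 1.

Section WeightedAverage.
Context {R : numDomainType} {I : finType} {w : I -> R}.
Hypothesis w_distr : is_distr w.

Lemma avg_le (f : I -> R) c : (forall i, f i <= c) -> \sum_i w i * f i <= c.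
Proof.
move=> le_fc; apply: le_trans (_ : \sum_i w i * c <= c).
  by apply: ler_sum => i _; apply: ler_wpM2l; [exact: w_distr.1 | exact: le_fc].
by rewrite -mulr_suml w_distr.2 mul1r.
Qed.

Lemma avg_ge (f : I -> R) c : (forall i, c <= f i) -> c <= \sum_i w i * f i.
Proof.
move=> le_cf; apply: le_trans (_ : \sum_i w i * c >= c) _.
  by rewrite -mulr_suml w_distr.2 mul1r.
by apply: ler_sum => i _; apply: ler_wpM2l; [exact: w_distr.1 | exact: le_cf].
Qed.

End WeightedAverage.

Section NextValue.
Context {R : realType} {S A : finType}.
Variables (P : S -> A -> S -> R) (r : S -> A -> R) (g : R) (pol : S -> A -> R).

Definition next_value (Q : S -> A -> R) : S -> A -> R :=
  fun s a => \sum_s' P s a s' * Vof pol Q s'.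

Definition value_iter (n : nat) : S -> A -> R :=
  iter n (bellman P r g pol) (fun _ _ => 0).

End NextValue.

Section PolicyEvaluation.
Context {R : realType} {S A : finType} {P : S -> A -> S -> R} {g : R}.
Hypotheses (hP : is_kernel P) (hg : 0 <= g < 1).
Implicit Types (r : S -> A -> R) (pol : S -> A -> R) (Q D : S -> A -> R).

Lemma bellmanE r pol Q s a :
  bellman P r g pol Q s a = r s a + g * next_value P pol Q s a.
Proof. by []. Qed.

Lemma next_valueB pol Q1 Q2 s a :
  next_value P pol (fun s a => Q1 s a - Q2 s a) s a =
  next_value P pol Q1 s a - next_value P pol Q2 s a.
Proof.
rewrite /next_value /Vof -sumrB; apply: eq_bigr => s' _.
rewrite -mulrBr -sumrB; congr (_ * _); apply: eq_bigr => a' _; exact: mulrBr.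
Qed.

Lemma next_value_le_Vof pol1 pol2 Q1 Q2 s a :
  (forall s', Vof pol1 Q1 s' <= Vof pol2 Q2 s') ->
  next_value P pol1 Q1 s a <= next_value P pol2 Q2 s a.
Proof.
by move=> le_V; apply: ler_sum => s' _; apply: ler_wpM2l; [exact: (hP s a).1 | exact: le_V].
Qed.

Lemma next_value_le {pol} Q1 Q2 s a : is_policy pol ->
  (forall s a, Q1 s a <= Q2 s a) -> next_value P pol Q1 s a <= next_value P pol Q2 s a.
Proof.
move=> hpol le_Q; apply: next_value_le_Vof => s'; apply: ler_sum => a' _.
by apply: ler_wpM2l; [exact: (hpol s').1 | exact: le_Q].
Qed.

Lemma next_value_cst {pol} c s a : is_policy pol -> next_value P pol (fun _ _ => c) s a = c.
Proof.
move=> hpol; rewrite /next_value /Vof.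
under eq_bigr => s' _ do rewrite -mulr_suml (hpol s').2 mul1r.
by rewrite -mulr_suml (hP s a).2 mul1r.
Qed.

Lemma norm_next_value_le {pol} D (c : R) s a : is_policy pol ->
  (forall s a, `|D s a| <= c) -> `|next_value P pol D s a| <= c.
Proof.
move=> hpol le_Dc; rewrite ler_norml; apply/andP; split.
  rewrite -(next_value_cst (- c) s a hpol); apply: next_value_le => // s' a'.
  by have := le_Dc s' a'; rewrite ler_norml => /andP[].
rewrite -(next_value_cst c s a hpol); apply: next_value_le => // s' a'.
by have := le_Dc s' a'; rewrite ler_norml => /andP[].
Qed.

Lemma minimum_principle {pol} D : is_policy pol ->
  (forall s a, g * next_value P pol D s a <= D s a) -> forall s a, 0 <= D s a.
Proof.
move=> hpol hD s a; have [g0 g1] := andP hg.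
have [[s0 a0] _ Dmin] := @arg_minP _ _ _ (s, a) xpredT (fun x : S * A => D x.1 x.2) erefl.
apply: le_trans (Dmin (s, a) erefl).
have : g * D s0 a0 <= D s0 a0.
  apply: le_trans (hD s0 a0); rewrite -{1}(next_value_cst (D s0 a0) s0 a0 hpol).
  by apply: ler_wpM2l => //; apply: next_value_le => // s' a'; exact: (Dmin (s', a')).
by rewrite -subr_ge0 -{1}[D s0 a0]mul1r -mulrBl pmulr_rge0 // subr_gt0.
Qed.

Lemma value_iter_increment r {pol} M : is_policy pol -> (forall s a, `|r s a| <= M) ->
  forall n s a, `|value_iter P r g pol n.+1 s a - value_iter P r g pol n s a| <= M * g ^+ n.
Proof.
move=> hpol le_rM; have [g0 _] := andP hg.
elim=> [|n IHn] s a.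
  by rewrite /value_iter /= bellmanE next_value_cst // mulr0 addr0 subr0 expr0 mulr1.
rewrite /value_iter !iterS -/(value_iter P r g pol n.+1) -/(value_iter P r g pol n) !bellmanE.
rewrite opprD addrACA subrr add0r -mulrBr -next_valueB normrM ger0_norm // exprS mulrCA.
by apply: ler_wpM2l => //; apply: norm_next_value_le.
Qed.

Lemma cvgn_value_iter r {pol} : is_policy pol ->
  forall s a, cvgn (fun n => value_iter P r g pol n s a).
Proof.
move=> hpol s a; pose M := \sum_(x : S * A) `|r x.1 x.2|.
have le_rM s' a' : `|r s' a'| <= M.
  by rewrite /M (bigD1 (s', a')) //= lerDl sumr_ge0.
apply: (@cvgn_geometric_increments R _ M g hg) => n.
exact: (value_iter_increment r M hpol le_rM).
Qed.

Lemma bellman_Qpi r {pol} : is_policy pol -> bellman P r g pol (Qpi P r g pol) = Qpi P r g pol.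
Proof.
move=> hpol; apply/funext => s; apply/funext => a.
have cvg_iter := cvgn_value_iter r hpol.
have : value_iter P r g pol n.+1 s a @[n --> \oo] --> bellman P r g pol (Qpi P r g pol) s a.
  apply: cvgD; first exact: cvg_cst.
  apply: cvgMl_tmp; apply: cvgn_sum => s'; apply: cvgMl_tmp; apply: cvgn_sum => a'.
  exact: cvgMl_tmp (cvg_iter s' a').
by rewrite (cvg_shiftS (fun n => value_iter P r g pol n s a)) => /cvg_lim <-.
Qed.

(* [Q1 - Q2] is [g] times the right-hand side of the hypothesis, which in turn bounds
   [next_value P pol (Q1 - Q2)] from above. *)
Lemma bellman_fix_le {r pol pol1 pol2 Q1 Q2} : is_policy pol ->
  bellman P r g pol1 Q1 = Q1 -> bellman P r g pol2 Q2 = Q2 ->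
  (forall s a, next_value P pol Q1 s a - next_value P pol Q2 s a <=
               next_value P pol1 Q1 s a - next_value P pol2 Q2 s a) ->
  forall s a, Q2 s a <= Q1 s a.
Proof.
move=> hpol fix1 fix2 le_next s a; rewrite -subr_ge0; move: s a.
apply: (minimum_principle (fun s a => Q1 s a - Q2 s a) hpol) => s a.
have -> : Q1 s a - Q2 s a = bellman P r g pol1 Q1 s a - bellman P r g pol2 Q2 s a.
  by rewrite fix1 fix2.
rewrite next_valueB !bellmanE opprD addrACA subrr add0r -mulrBr.
by apply: ler_wpM2l; [case/andP: hg | exact: le_next].
Qed.

Lemma Qpi_unique {r pol Q} : is_policy pol -> bellman P r g pol Q = Q -> Q = Qpi P r g pol.
Proof.
move=> hpol fixQ; have fixQpi := bellman_Qpi r hpol.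
apply/funext => s; apply/funext => a; apply/eqP; rewrite eq_le.
by rewrite (bellman_fix_le hpol fixQ fixQpi) ?(bellman_fix_le hpol fixQpi fixQ).
Qed.

Lemma Qpi_bounds {r pol} : is_policy pol -> (forall s a, 0 <= r s a <= 1) ->
  forall s a, 0 <= Qpi P r g pol s a <= (1 - g)^-1.
Proof.
move=> hpol hr; have [g0 g1] := andP hg.
have fixQ := bellman_Qpi r hpol; set Q := Qpi P r g pol in fixQ *.
have Q_ge0 : forall s a, 0 <= Q s a.
  apply: (minimum_principle Q hpol) => s a.
  by rewrite -[in X in _ <= X]fixQ bellmanE lerDr; case/andP: (hr s a).
have Q_le_inv : forall s a, 0 <= (1 - g)^-1 - Q s a.
  apply: (minimum_principle (fun s a => (1 - g)^-1 - Q s a) hpol) => s a.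
  rewrite next_valueB next_value_cst // -[in X in _ <= _ - X]fixQ bellmanE.
  have : (1 - g)^-1 = 1 + g * (1 - g)^-1 by field; rewrite subr_eq0 eq_sym lt_eqF.
  move: (hr s a) (next_value P pol Q s a) ((1 - g)^-1) => /andP[_ r1] x c; lra.
by move=> s a; rewrite Q_ge0 -subr_ge0 Q_le_inv.
Qed.

Lemma Vpi_bounds {r pol} : is_policy pol -> (forall s a, 0 <= r s a <= 1) ->
  forall s, 0 <= Vpi P r g pol s <= (1 - g)^-1.
Proof.
move=> hpol hr s; have hQ := Qpi_bounds hpol hr s.
by apply/andP; split; [apply: (avg_ge (hpol s)) | apply: (avg_le (hpol s))] => a;
  case/andP: (hQ a).
Qed.

End PolicyEvaluation.

Section Optimality.
Context {R : realType} {S A : finType} {P : S -> A -> S -> R} {g : R}.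
Hypotheses (hP : is_kernel P) (hg : 0 <= g < 1).
Implicit Types (r : S -> A -> R) (pol : S -> A -> R) (Q : S -> A -> R).

Definition deviate pol (s0 : S) (a0 : A) : S -> A -> R :=
  fun s a => if s == s0 then (a == a0)%:R else pol s a.

Lemma deviate_policy {pol} s0 a0 : is_policy pol -> is_policy (deviate pol s0 a0).
Proof.
move=> hpol s; rewrite /deviate; case: eqP => _; last exact: hpol.
split=> [a|]; first exact: ler0n.
by rewrite (bigD1 a0) //= eqxx big1 ?addr0 // => a /negbTE ->.
Qed.

Lemma Vof_deviate pol s0 a0 Q s :
  Vof (deviate pol s0 a0) Q s = if s == s0 then Q s0 a0 else Vof pol Q s.
Proof.
rewrite /Vof /deviate; case: eqP => [->|//].
rewrite (bigD1 a0) //= eqxx mul1r big1 ?addr0 // => a /negbTE ->.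
exact: mul0r.
Qed.

Lemma Qpi_le_Vpi_optimal {r pol} : is_optimal_policy P r g pol ->
  forall s a, Qpi P r g pol s a <= Vpi P r g pol s.
Proof.
move=> [hpol opt] s0 a0; rewrite leNgt; apply/negP => lt_VQ.
have hdev := deviate_policy s0 a0 hpol.
have le_Q_dev : forall s a, Qpi P r g pol s a <= Qpi P r g (deviate pol s0 a0) s a.
  apply: (bellman_fix_le hP hg hdev (bellman_Qpi hP hg r hdev) (bellman_Qpi hP hg r hpol)).
  move=> s a; rewrite lerD2l lerN2; apply: next_value_le_Vof => // s'.
  by rewrite Vof_deviate; case: eqP => [->|//]; exact: ltW.
have := opt _ hdev s0; rewrite /Vpi Vof_deviate eqxx => /(le_trans (le_Q_dev s0 a0)).
by rewrite leNgt lt_VQ.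
Qed.

Lemma Qopt_eq_Qpi_greedy {r pol} : is_policy pol ->
  (forall s a, Qpi P r g pol s a <= Vpi P r g pol s) -> Qopt P r g = Qpi P r g pol.
Proof.
move=> hpol greedy.
have dominates pol' : is_policy pol' -> forall s a, Qpi P r g pol' s a <= Qpi P r g pol s a.
  move=> hpol'.
  apply: (bellman_fix_le hP hg hpol' (bellman_Qpi hP hg r hpol) (bellman_Qpi hP hg r hpol')).
  move=> s a; rewrite lerD2r; apply: next_value_le_Vof => // s'.
  by apply: (avg_le (hpol' s')) => a'; exact: greedy.
apply/funext => s; apply/funext => a; apply/eqP; rewrite eq_le.
rewrite /Qopt; set E := [set _ | _ in _].
have ubE : ubound E (Qpi P r g pol s a) by move=> _ [pol' hpol' <-]; exact: dominates.
have memE : E (Qpi P r g pol s a) by exists pol.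
rewrite ge_sup //=; last by exists (Qpi P r g pol s a).
by apply: ub_le_sup memE; exists (Qpi P r g pol s a).
Qed.

End Optimality.

Section AnchorModel.
Context {R : realType} {S A : finType} {K : nat} {lam : S -> A -> 'I_K -> R}.
Variable j : 'I_K.
Hypotheses (lam_ge0 : forall s a k, 0 <= lam s a k) (lam_sum1 : forall s a, \sum_k lam s a k = 1).
Implicit Types (p V : S -> R) (PK : 'I_K -> S -> R).

Lemma empirical_distr N (smp : 'I_N -> S) : (0 < N)%N -> is_distr (empirical R smp).
Proof.
move=> N_gt0; split=> [s|]; first by rewrite /empirical divr_ge0.
rewrite /empirical -mulr_suml.
have -> : \sum_s (#|[set i | smp i == s]|%:R : R) = N%:R.
  rewrite -natr_sum -[in RHS](card_ord N) -sum1_card (partition_big smp xpredT) //=.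
  congr (_%:R); apply: eq_bigr => s _; rewrite -sum1_card; apply: eq_bigl => i.
  by rewrite /in_mem /= /in_set asboolb.
by rewrite mulfV // pnatr_eq0 -lt0n.
Qed.

Lemma lin_extend_kernel {PK} : (forall k, is_distr (PK k)) -> is_kernel (lin_extend lam PK).
Proof.
move=> hPK s a; split=> [s'|].
  by apply: sumr_ge0 => k _; apply: mulr_ge0 => //; exact: (hPK k).1.
rewrite /lin_extend exchange_big /= -(lam_sum1 s a); apply: eq_bigr => k _.
by rewrite -mulr_sumr (hPK k).2 mulr1.
Qed.

Lemma PK_replace_distr {PK p} :
  (forall k, is_distr (PK k)) -> is_distr p -> forall k, is_distr (PK_replace PK j p k).
Proof. by move=> hPK hp k; rewrite /PK_replace; case: eqP. Qed.

Lemma sum_lin_extend_replace PK p V s a :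
  \sum_s' lin_extend lam PK s a s' * V s' =
  \sum_s' lin_extend lam (PK_replace PK j p) s a s' * V s' +
  lam s a j * (dotp (PK j) V - dotp p V).
Proof.
rewrite /dotp -sumrB mulr_sumr -big_split /=; apply: eq_bigr => s' _.
rewrite /lin_extend (bigD1 j) //= [X in _ = X * _ + _](bigD1 j) //= /PK_replace eqxx.
have -> : \sum_(k < K | k != j) lam s a k * (if k == j then p else PK k) s' =
          \sum_(k < K | k != j) lam s a k * PK k s'.
  by apply: eq_bigr => k /negbTE ->.
ring.
Qed.

Lemma bellman_lin_extend_replace PK p r (g : R) pol Q :
  bellman (lin_extend lam PK) r g pol Q =
  bellman (lin_extend lam (PK_replace PK j p))
    (aux_reward r lam j (g * (dotp (PK j) (Vof pol Q) - dotp p (Vof pol Q)))) g pol Q.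
Proof.
apply/funext => s; apply/funext => a.
by rewrite /bellman (sum_lin_extend_replace _ p) /aux_reward; ring.
Qed.

Lemma Qpi_lin_extend_replace {PK p} r {g : R} {pol} :
  (forall k, is_distr (PK k)) -> is_distr p -> is_policy pol -> 0 <= g < 1 ->
  Qpi (lin_extend lam PK) r g pol =
  Qpi (lin_extend lam (PK_replace PK j p))
    (aux_reward r lam j (g * (dotp (PK j) (Vpi (lin_extend lam PK) r g pol)
                              - dotp p (Vpi (lin_extend lam PK) r g pol)))) g pol.
Proof.
move=> hPK hp hpol hg.
apply: (Qpi_unique (lin_extend_kernel (PK_replace_distr hPK hp)) hg hpol).
rewrite -bellman_lin_extend_replace.
exact: (bellman_Qpi (lin_extend_kernel hPK) hg r hpol).
Qed.

End AnchorModel.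

Lemma discounted_dotp_diff_bound (R : realType) (S : finType) (g : R) (p q V : S -> R) :
  0 < g < 1 -> is_distr p -> is_distr q -> (forall s, 0 <= V s <= (1 - g)^-1) ->
  - (1 - g)^-1 <= g * (dotp p V - dotp q V) <= (1 - g)^-1.
Proof.
move=> /andP[g0 g1] hp hq hV.
have dotp_bounds p' : is_distr p' -> 0 <= dotp p' V <= (1 - g)^-1.
  move=> hp'; apply/andP; split; [apply: (avg_ge hp') | apply: (avg_le hp')] => s;
  by case/andP: (hV s).
have /andP[x0 xc] := dotp_bounds p hp; have /andP[y0 yc] := dotp_bounds q hq.
rewrite -ler_norml normrM (ger0_norm (ltW g0)).
apply: le_trans (ler_piMl (normr_ge0 _) (ltW g1)) _.
by rewrite ler_norml; apply/andP; split; lra.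
Qed.

Theorem lemma6 (R : realType) (S A : finType)
  (P : S -> A -> S -> R) (r : S -> A -> R) (g : R)
  (d : nat) (phi : S -> A -> 'I_d -> R) (psi : 'I_d -> S -> R)
  (K : nat) (sK : 'I_K -> S) (aK : 'I_K -> A) (lam : S -> A -> 'I_K -> R)
  (N : nat) (smp : 'I_K -> 'I_N -> S)
  (j : 'I_K) (pi pihat : S -> A -> R) :
  is_kernel P ->
  (forall s a, 0 <= r s a <= 1) ->
  0 < g < 1 ->
  (forall s a s', P s a s' = \sum_(k < d) phi s a k * psi k s') ->
  (forall s a k, 0 <= lam s a k) ->
  (forall s a, \sum_(k < K) lam s a k = 1) ->
  (forall s a i, phi s a i = \sum_(k < K) lam s a k * phi (sK k) (aK k) i) ->
  (0 < N)%N ->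
  let PKhat : 'I_K -> S -> R := fun k => empirical R (smp k) in
  let Phat := lin_extend lam PKhat in
  let Ptil := lin_extend lam (PK_replace PKhat j (P (sK j) (aK j))) in
  is_policy pi ->
  is_optimal_policy Phat r g pihat ->
  let upi := g * (dotp (PKhat j) (Vpi Phat r g pi)
                  - dotp (P (sK j) (aK j)) (Vpi Phat r g pi)) in
  let ustar := g * (dotp (PKhat j) (Vpi Phat r g pihat)
                    - dotp (P (sK j) (aK j)) (Vpi Phat r g pihat)) in
  [/\ Qpi Phat r g pi = Qpi Ptil (aux_reward r lam j upi) g pi,
      Qpi Phat r g pihat = Qpi Ptil (aux_reward r lam j ustar) g pihat,
      Qpi Ptil (aux_reward r lam j ustar) g pihat = Qopt Ptil (aux_reward r lam j ustar) g,
      - (1 - g)^-1 <= upi <= (1 - g)^-1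
    & - (1 - g)^-1 <= ustar <= (1 - g)^-1].
Proof.
move=> hP hr hg _ lam_ge0 lam_sum1 _ N_gt0 PKhat Phat Ptil hpi hopt upi ustar.
have hg' : 0 <= g < 1 by case/andP: hg => g0 ->; rewrite ltW.
have hPK k : is_distr (PKhat k) by exact: empirical_distr.
have hPhat : is_kernel Phat by exact: lin_extend_kernel.
have hPtil : is_kernel Ptil by apply: lin_extend_kernel => //; exact: PK_replace_distr.
have Qhat_Qtil pol (hpol : is_policy pol) :=
  Qpi_lin_extend_replace j lam_ge0 lam_sum1 r hPK (hP (sK j) (aK j)) hpol hg'.
have u_bound pol : is_policy pol -> - (1 - g)^-1 <=
    g * (dotp (PKhat j) (Vpi Phat r g pol) - dotp (P (sK j) (aK j)) (Vpi Phat r g pol))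
    <= (1 - g)^-1.
  by move=> hpol; apply: discounted_dotp_diff_bound => //; exact: Vpi_bounds.
have hpihat := hopt.1.
split; [exact: Qhat_Qtil | exact: Qhat_Qtil | | exact: u_bound | exact: u_bound].
apply/esym/(Qopt_eq_Qpi_greedy hPtil hg' hpihat) => s a.
rewrite /Vpi -Qhat_Qtil //; exact: Qpi_le_Vpi_optimal.
Qed.
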